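(* Let $\mathcal R$ and $\mathcal S$ be TRSs which are normalization equivalent modulo $\mathcal B$, terminating modulo $\mathcal B$, left-reduced and right-$\mathcal B$-reduced. Then every rule of $\mathcal R$ has a right-$\mathcal B$-equivalent variant in $\mathcal S$ and vice versa.
   Context: Terms over a signature $\mathcal F$; $\to_{\mathcal R}$ is the usual rewrite relation, $\leftarrow$ its inverse. $\mathcal B$ is a fixed ES with $\mathrm{Var}(\ell)=\mathrm{Var}(r)$ for all $\ell\approx r\in\mathcal B$, $\sim_{\mathcal B}=\leftrightarrow^*_{\mathcal B}$, $\to_{\mathcal R/\mathcal B}=\sim_{\mathcal B}\cdot\to_{\mathcal R}\cdot\sim_{\mathcal B}$. Terminating modulo $\mathcal B$: no infinite $\to_{\mathcal R/\mathcal B}$-sequence. Normalization equivalent modulo $\mathcal B$: $\to^!_{\mathcal R}\cdot\sim_{\mathcal B}=\to^!_{\mathcal S}\cdot\sim_{\mathcal B}$, where $a\to^!b$ means $a\to^*b$ with $b$ a normal form. A TRS is left-reduced if for every rule $\ell\to r$, $\ell$ is a normal form of the TRS without that rule; right-$\mathcal B$-reduced if for every rule $\ell\to r$, $r$ is a normal form of $\to_{\mathcal R/\mathcal B}$. Two rules $\ell\to r,\ell'\to r'$ are right-$\mathcal B$-equivalent variants if there is a renaming $\sigma$ with $\ell\sigma=\ell'$ and $r\sigma\sim_{\mathcal B}r'$. *)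

From Stdlib Require Import List Relations.
Import ListNotations.
Set Implicit Arguments.

Section TRS.
Variable F : Type.
Variable ar : F -> nat.

Inductive term : Type :=
| Var : nat -> term
| Fun : F -> list term -> term.

Inductive wf : term -> Prop :=
| wf_var x : wf (Var x)
| wf_fun f ts : length ts = ar f -> (forall t, In t ts -> wf t) -> wf (Fun f ts).

Inductive occ (x : nat) : term -> Prop :=
| occ_var : occ x (Var x)
| occ_fun f ts t : In t ts -> occ x t -> occ x (Fun f ts).

Fixpoint subst (sigma : nat -> term) (t : term) : term :=
  match t with
  | Var x => sigma x
  | Fun f ts => Fun f (map (subst sigma) ts)
  end.

Definition rules := term -> term -> Prop.

Inductive rstep (R : rules) : term -> term -> Prop :=
| rstep_root l r sigma : R l r -> rstep R (subst sigma l) (subst sigma r)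
| rstep_ctx f ts1 ts2 s t :
    rstep R s t -> rstep R (Fun f (ts1 ++ s :: ts2)) (Fun f (ts1 ++ t :: ts2)).

Definition is_TRS (R : rules) : Prop :=
  forall l r, R l r ->
    wf l /\ wf r /\ (forall x, l <> Var x) /\ (forall x, occ x r -> occ x l).

Definition is_ES_varsym (B : rules) : Prop :=
  forall l r, B l r -> wf l /\ wf r /\ (forall x, occ x l <-> occ x r).

Definition convB (B : rules) : relation term :=
  clos_refl_sym_trans term (rstep B).

Definition rstep_mod (R B : rules) (s t : term) : Prop :=
  exists s' t', convB B s s' /\ rstep R s' t' /\ convB B t' t.

Definition NF (rel : relation term) (t : term) : Prop := forall u, ~ rel t u.

Definition normalizes (R : rules) (s u : term) : Prop :=
  clos_refl_trans term (rstep R) s u /\ NF (rstep R) u.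

Definition terminating_mod (R B : rules) : Prop :=
  ~ exists seq : nat -> term, (forall i, wf (seq i)) /\
      (forall i, rstep_mod R B (seq i) (seq (S i))).

Definition norm_equiv_mod (R S B : rules) : Prop :=
  forall s t, wf s -> wf t ->
    ((exists u, normalizes R s u /\ convB B u t) <->
     (exists u, normalizes S s u /\ convB B u t)).

Definition remove_rule (R : rules) (l r : term) : rules :=
  fun l' r' => R l' r' /\ (l', r') <> (l, r).

Definition left_reduced (R : rules) : Prop :=
  forall l r, R l r -> NF (rstep (remove_rule R l r)) l.

Definition right_B_reduced (R B : rules) : Prop :=
  forall l r, R l r -> NF (rstep_mod R B) r.

Definition renaming (sigma : nat -> term) : Prop :=
  exists pi pinv : nat -> nat,
    (forall x, pinv (pi x) = x) /\ (forall x, pi (pinv x) = x) /\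
    (forall x, sigma x = Var (pi x)).

Definition right_B_equiv_variant (B : rules) (l r l' r' : term) : Prop :=
  exists sigma, renaming sigma /\ subst sigma l = l' /\ convB B (subst sigma r) r'.

End TRS.

(* Let l -> r be a rule of R. Since l ->!_R r, normalization equivalence gives
   l ->!_S u ~B r, and l itself cannot be S-normal, for then l ~B r would close an
   R/B-cycle. Every proper subterm of l is R-normal by left-reducedness, hence
   S-normal (an S-step from an R-normal term would, via normalization equivalence,
   close an S/B-cycle); so the first S-step from l happens at the root, with some
   rule l' -> r' and l = l' sg. Symmetrically l' = l0 tau at the root for a rule of
   R, and left-reducedness of R forces l0 -> r0 to be l -> r. From l tau sg = l the
   substitution tau is a renaming on the variables of l with inverse sg, r' sg is
   S-normal, so u = r' sg, and applying tau to r' sg ~B r yields r' ~B r tau. *)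

From Stdlib Require Import List Relations Lia PeanoNat Classical ClassicalEpsilon.
Import ListNotations.
Set Implicit Arguments.

Section Terms.
Variable F : Type.
Notation term := (term F).

Lemma term_ind' (P : term -> Prop) :
  (forall x, P (Var F x)) ->
  (forall f ts, (forall t, In t ts -> P t) -> P (Fun f ts)) ->
  forall t, P t.
Proof.
  intros HV HF. fix IH 1. intros [x|f ts]; [apply HV|apply HF].
  induction ts as [|a ts IHts]; intros t Ht; [destruct Ht|].
  destruct Ht as [<-|Ht]; [apply IH|apply IHts, Ht].
Qed.

Lemma subst_comp (s1 s2 : nat -> term) t :
  subst s2 (subst s1 t) = subst (fun x => subst s2 (s1 x)) t.
Proof.
  induction t using term_ind'; simpl; auto.
  f_equal. rewrite map_map. apply map_ext_in. auto.
Qed.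

Lemma subst_Var t : subst (Var F) t = t.
Proof.
  induction t using term_ind'; simpl; auto.
  f_equal. rewrite <- (map_id ts) at 2. apply map_ext_in. auto.
Qed.

Lemma subst_ext_occ (s1 s2 : nat -> term) t :
  (forall x, occ x t -> s1 x = s2 x) -> subst s1 t = subst s2 t.
Proof.
  induction t as [x|f ts IH] using term_ind'; simpl; intros Hx.
  - apply Hx. constructor.
  - f_equal. apply map_ext_in. intros a Ha. apply IH; auto.
    intros x Hxa. apply Hx. econstructor; eauto.
Qed.

Lemma occ_subst_agree (s1 s2 : nat -> term) t x :
  subst s1 t = subst s2 t -> occ x t -> s1 x = s2 x.
Proof.
  intros E Ho. induction Ho as [|f ts t Ht Ho IH]; simpl in E; auto.
  injection E as E. apply IH. clear IH Ho.
  induction ts as [|a ts IHts]; [destruct Ht|].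
  injection E as Ea Ets. destruct Ht as [<-|Ht]; auto.
Qed.

Lemma occ_subst (s : nat -> term) t y :
  occ y (subst s t) -> exists x, occ x t /\ occ y (s x).
Proof.
  induction t as [x|f ts IH] using term_ind'; simpl; intros Ho.
  - exists x. split; [constructor|exact Ho].
  - inversion Ho as [|? ? u Hu Hyu]; subst.
    apply in_map_iff in Hu as [v [<- Hv]].
    destruct (IH v Hv Hyu) as [x [Hxv Hyx]].
    exists x. split; [econstructor; eauto|exact Hyx].
Qed.

Fixpoint vars (t : term) : list nat :=
  match t with Var _ x => [x] | Fun _ ts => flat_map vars ts end.

Lemma occ_vars x t : occ x t <-> In x (vars t).
Proof.
  induction t as [y|f ts IH] using term_ind'; simpl.
  - split; [intros H; inversion H; auto|intros [<-|[]]; constructor].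
  - rewrite in_flat_map. split.
    + intros Ho. inversion Ho; subst. eexists. split; [eassumption|apply IH; auto].
    + intros [t [Ht Hx]]. econstructor; [eassumption|apply IH; auto].
Qed.

Fixpoint size (t : term) : nat :=
  match t with Var _ _ => 1 | Fun _ ts => S (list_sum (map size ts)) end.

Lemma size_subst (s : nat -> term) t : size t <= size (subst s t).
Proof.
  induction t as [x|f ts IH] using term_ind'; simpl.
  - destruct (s x); simpl; lia.
  - rewrite map_map. apply le_n_S. induction ts as [|a ts IHts]; simpl; auto.
    apply Nat.add_le_mono; [apply IH; left; reflexivity|].
    apply IHts. intros t Ht. apply IH. right. exact Ht.
Qed.

Lemma size_arg_lt f ts1 s ts2 : size s < size (Fun f (ts1 ++ s :: ts2)).
Proof.
  simpl. rewrite map_app, list_sum_app. simpl. lia.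
Qed.

Lemma rstep_subst (R : rules F) th s t :
  rstep R s t -> rstep R (subst th s) (subst th t).
Proof.
  induction 1; simpl.
  - rewrite !subst_comp. apply rstep_root; auto.
  - rewrite !map_app. apply rstep_ctx; auto.
Qed.

Lemma convB_subst (B : rules F) th s t :
  convB B s t -> convB B (subst th s) (subst th t).
Proof.
  induction 1.
  - apply rst_step, rstep_subst; auto.
  - apply rst_refl.
  - apply rst_sym; auto.
  - eapply rst_trans; eauto.
Qed.

Lemma rstep_mono (R R' : rules F) s t :
  (forall l r, R l r -> R' l r) -> rstep R s t -> rstep R' s t.
Proof. intros HR. induction 1; constructor; auto. Qed.

Lemma rstep_rule (R : rules F) l r : R l r -> rstep R l r.
Proof.
  intros Hlr. pose proof (@rstep_root F R l r (Var F) Hlr) as H.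
  rewrite !subst_Var in H. exact H.
Qed.

Lemma rstep_small_lhs (R : rules F) s t :
  rstep R s t -> rstep (fun l r => R l r /\ size l <= size s) s t.
Proof.
  induction 1 as [l r sg Hlr|f ts1 ts2 s' t' _ IH].
  - apply rstep_root. split; [exact Hlr|apply size_subst].
  - apply rstep_ctx. revert IH. apply rstep_mono.
    intros l r [Hlr Hl]. split; [exact Hlr|].
    pose proof (size_arg_lt f ts1 s' ts2). lia.
Qed.

Lemma rstep_flip (R : rules F) s t : rstep R s t -> rstep (fun l r => R r l) t s.
Proof.
  induction 1.
  - apply rstep_root with (R := fun l r => R r l); auto.
  - apply rstep_ctx; auto.
Qed.

Lemma rtc_NF (R : rules F) s u :
  clos_refl_trans term (rstep R) s u -> NF (rstep R) s -> u = s.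
Proof.
  intros Hsu HN. apply clos_rt_rt1n in Hsu.
  destruct Hsu as [|s' ? Hs]; [reflexivity|destruct (HN _ Hs)].
Qed.

Lemma NF_subst_of_retraction (R : rules F) (sg tau : nat -> term) t :
  subst tau (subst sg t) = t -> NF (rstep R) t -> NF (rstep R) (subst sg t).
Proof.
  intros Et HN u Hu. apply (HN (subst tau u)). rewrite <- Et at 1. apply rstep_subst, Hu.
Qed.

End Terms.

Section WellFormed.
Variable F : Type.
Variable ar : F -> nat.

Lemma wf_subst_occ (s : nat -> term F) t x : wf ar (subst s t) -> occ x t -> wf ar (s x).
Proof.
  intros Hw Ho. induction Ho; simpl in Hw; auto.
  inversion Hw as [|? ? _ Hall]; subst. apply IHHo, Hall, in_map. assumption.
Qed.

Lemma wf_subst (s : nat -> term F) t :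
  wf ar t -> (forall x, occ x t -> wf ar (s x)) -> wf ar (subst s t).
Proof.
  induction 1 as [x|f ts Hlen _ IH]; simpl; intros Hx.
  - apply Hx. constructor.
  - constructor; [rewrite length_map; exact Hlen|].
    intros u Hu. apply in_map_iff in Hu as [v [<- Hv]].
    apply IH; auto. intros y Hy. apply Hx. econstructor; eauto.
Qed.

Lemma rstep_wf (R : rules F) s t :
  (forall l r, R l r -> wf ar r /\ (forall x, occ x r -> occ x l)) ->
  rstep R s t -> wf ar s -> wf ar t.
Proof.
  intros HR. induction 1 as [l r sg Hlr|f ts1 ts2 s' t' _ IH]; intros Hw.
  - destruct (HR _ _ Hlr) as [Hr Hv]. apply wf_subst; auto.
    intros x Hx. eapply wf_subst_occ; eauto.
  - inversion Hw as [|? ? Hlen Hall]; subst. constructor.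
    + rewrite length_app in *. exact Hlen.
    + intros u Hu. apply in_app_or in Hu as [Hu|[<-|Hu]];
        [|apply IH|]; apply Hall, in_or_app; simpl; auto.
Qed.

Lemma convB_wf (B : rules F) s t :
  is_ES_varsym ar B -> convB B s t -> wf ar s -> wf ar t.
Proof.
  intros HB Hst.
  enough (Hsym : wf ar s <-> wf ar t) by apply Hsym.
  induction Hst as [s t Hst| | |]; try tauto.
  split; intros Hw.
  - revert Hst Hw. apply rstep_wf.
    intros l r Hlr. destruct (HB _ _ Hlr) as [_ [Hr Hv]]. split; [exact Hr|apply Hv].
  - apply rstep_flip in Hst. revert Hst Hw. apply rstep_wf.
    intros l r Hlr. destruct (HB _ _ Hlr) as [Hl [_ Hv]]. split; [exact Hl|apply Hv].
Qed.

Lemma rstep_TRS_wf (R : rules F) s t : is_TRS ar R -> rstep R s t -> wf ar s -> wf ar t.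
Proof.
  intros HR. apply rstep_wf. intros l r Hlr. destruct (HR _ _ Hlr) as [_ [Hr [_ Hv]]]. auto.
Qed.

Lemma rstep_mod_wf (R B : rules F) s t :
  is_ES_varsym ar B -> is_TRS ar R -> rstep_mod R B s t -> wf ar s -> wf ar t.
Proof.
  intros HB HR [s' [t' [Hs [Hst Ht]]]] Hw.
  exact (convB_wf HB Ht (rstep_TRS_wf HR Hst (convB_wf HB Hs Hw))).
Qed.

End WellFormed.

Definition transp (u v z : nat) : nat :=
  if Nat.eqb z u then v else if Nat.eqb z v then u else z.

Lemma transpK u v z : transp u v (transp u v z) = z.
Proof.
  unfold transp.
  destruct (Nat.eqb_spec z u); destruct (Nat.eqb_spec z v); subst;
    repeat (rewrite Nat.eqb_refl || simpl); try reflexivity;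
    repeat match goal with |- context [Nat.eqb ?a ?b] => destruct (Nat.eqb_spec a b) end;
    congruence.
Qed.

Lemma transp_l u v : transp u v u = v.
Proof. unfold transp. rewrite Nat.eqb_refl. reflexivity. Qed.

Lemma transp_id u v z : z <> u -> z <> v -> transp u v z = z.
Proof.
  intros Hu Hv. unfold transp.
  destruct (Nat.eqb_spec z u); [congruence|]. destruct (Nat.eqb_spec z v); congruence.
Qed.

Lemma injective_on_extends_to_bijection (xs : list nat) (f : nat -> nat) :
  (forall a b, In a xs -> In b xs -> f a = f b -> a = b) ->
  exists pi pinv : nat -> nat,
    (forall x, pinv (pi x) = x) /\ (forall x, pi (pinv x) = x) /\
    (forall x, In x xs -> pi x = f x).
Proof.
  induction xs as [|a xs IH]; intros Hinj.
  - exists (fun x => x), (fun x => x). simpl. tauto.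
  - destruct IH as [pi [pinv [Hl [Hr Hf]]]].
    { intros x y Hx Hy. apply Hinj; right; assumption. }
    destruct (in_dec Nat.eq_dec a xs) as [Ha|Ha].
    { exists pi, pinv. split; [exact Hl|split; [exact Hr|]].
      intros x [<-|Hx]; auto. }
    (* post-compose with the transposition moving pi a to f a *)
    exists (fun x => transp (pi a) (f a) (pi x)), (fun x => pinv (transp (pi a) (f a) x)).
    split; [intros x; rewrite transpK; apply Hl|].
    split; [intros x; rewrite Hr; apply transpK|].
    intros x [<-|Hx]; [apply transp_l|].
    rewrite (Hf x Hx). apply transp_id.
    + intros E. rewrite <- (Hf x Hx) in E.
      assert (x = a) as -> by (rewrite <- (Hl x), <- (Hl a); congruence). contradiction.
    + intros E. assert (x = a) as -> by (apply Hinj; simpl; auto). contradiction.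
Qed.

Section Renamings.
Variable F : Type.
Notation term := (term F).

Lemma retraction_var (sg tau : nat -> term) l x :
  subst sg (subst tau l) = l -> occ x l -> subst sg (tau x) = Var F x.
Proof.
  intros E Hx. apply (occ_subst_agree (fun y => subst sg (tau y)) (Var F) (t := l)); [|exact Hx].
  rewrite <- subst_comp, subst_Var. exact E.
Qed.

Lemma retraction_renaming (sg tau : nat -> term) l :
  subst sg (subst tau l) = l ->
  exists rho, renaming rho /\ forall x, occ x l -> rho x = tau x.
Proof.
  intros E.
  assert (Htau : forall x, occ x l -> exists y, tau x = Var F y /\ sg y = Var F x).
  { intros x Hx. pose proof (retraction_var sg tau E Hx) as Ex.
    destruct (tau x) as [y|]; [exists y; auto|discriminate]. }
  set (pi0 := fun x => match tau x with Var _ y => y | _ => 0 end).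
  destruct (injective_on_extends_to_bijection (vars l) pi0) as [pi [pinv [Hl [Hr Hpi]]]].
  { intros a b Ha Hb Eab. apply occ_vars in Ha, Hb.
    destruct (Htau a Ha) as [ya [Ea Sa]]. destruct (Htau b Hb) as [yb [Eb Sb]].
    unfold pi0 in Eab. rewrite Ea, Eb in Eab. subst yb. congruence. }
  exists (fun x => Var F (pi x)). split.
  - exists pi, pinv. auto.
  - intros x Hx. rewrite Hpi by (apply occ_vars; exact Hx).
    destruct (Htau x Hx) as [y [Ey _]]. unfold pi0. rewrite Ey. reflexivity.
Qed.

Lemma retraction_inverse (sg tau : nat -> term) l y :
  subst sg (subst tau l) = l -> occ y (subst tau l) -> subst tau (sg y) = Var F y.
Proof.
  intros E Hy. destruct (occ_subst tau l Hy) as [x [Hx Hyx]].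
  pose proof (retraction_var sg tau E Hx) as Ex.
  destruct (tau x) as [z|] eqn:Etau; [|discriminate].
  inversion Hyx; subst. simpl in Ex. rewrite Ex. exact Etau.
Qed.

End Renamings.

Lemma chain_of_serial {T} (rel : relation T) (Q : T -> Prop) x :
  (forall a, Q a -> exists b, rel a b /\ Q b) -> Q x ->
  exists seq : nat -> T, (forall i, Q (seq i)) /\ forall i, rel (seq i) (seq (S i)).
Proof.
  intros Hser Qx.
  assert (Hnext : forall a, exists b, Q a -> rel a b /\ Q b).
  { intros a. destruct (classic (Q a)) as [Qa|Qa].
    - destruct (Hser a Qa) as [b Hb]. exists b. auto.
    - exists a. tauto. }
  destruct (choice _ Hnext) as [g Hg].
  exists (fun i => Nat.iter i g x).
  assert (HQ : forall i, Q (Nat.iter i g x)).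
  { induction i; simpl; [exact Qx|apply Hg; exact IHi]. }
  split; [exact HQ|]. intros i. apply Hg, HQ.
Qed.

Lemma chain_of_cycle {T} (rel : relation T) (P : T -> Prop) x :
  (forall a b, P a -> rel a b -> P b) -> P x -> clos_trans T rel x x ->
  exists seq : nat -> T, (forall i, P (seq i)) /\ forall i, rel (seq i) (seq (S i)).
Proof.
  intros HP Px Hx.
  destruct (chain_of_serial rel (fun a => P a /\ clos_trans T rel a a) x)
    as [seq [Hseq Hrel]]; [|split; assumption|].
  - intros a [Pa Ha]. apply clos_trans_t1n in Ha.
    inversion Ha as [? Haa|b ? Hab Hba]; subst.
    + exists a. split; [exact Haa|]. split; [exact Pa|]. apply t_step. exact Haa.
    + exists b. split; [exact Hab|]. split; [eapply HP; eauto|].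
      apply clos_t1n_trans in Hba. eapply t_trans; [exact Hba|]. apply t_step. exact Hab.
  - exists seq. split; [intros i; apply Hseq|exact Hrel].
Qed.

Section RewritingModulo.
Variable F : Type.
Variable ar : F -> nat.
Variable B : rules F.
Hypothesis HB : is_ES_varsym ar B.
Notation term := (term F).

Lemma rstep_mod_of_rstep (R : rules F) s t : rstep R s t -> rstep_mod R B s t.
Proof. intros H. exists s, t. split; [apply rst_refl|split; [exact H|apply rst_refl]]. Qed.

Lemma rtc_mod_of_rtc (R : rules F) s t :
  clos_refl_trans term (rstep R) s t -> clos_refl_trans term (rstep_mod R B) s t.
Proof.
  induction 1; [apply rt_step, rstep_mod_of_rstep; assumption|apply rt_refl|].
  eapply rt_trans; eassumption.
Qed.

Lemma terminating_mod_acyclic (R : rules F) x :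
  is_TRS ar R -> terminating_mod ar R B -> wf ar x ->
  ~ clos_trans term (rstep_mod R B) x x.
Proof.
  intros HR Hter Hx Hcyc. apply Hter.
  apply (@chain_of_cycle _ (rstep_mod R B) (wf ar) x); auto.
  intros a b Ha Hab. exact (rstep_mod_wf HB HR Hab Ha).
Qed.

(* An S-step from an R-normal x leads, through x ->!_S u ~B x, back to itself modulo B. *)
Lemma norm_equiv_mod_NF (R S : rules F) x :
  is_TRS ar S -> norm_equiv_mod ar R S B -> terminating_mod ar S B ->
  wf ar x -> NF (rstep R) x -> NF (rstep S) x.
Proof.
  intros HS Hne Hter Hx HN w Hxw.
  destruct (proj1 (Hne x x Hx Hx)) as [u [[Hxu HNu] Hux]].
  { exists x. split; [split; [apply rt_refl|exact HN]|apply rst_refl]. }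
  apply clos_rt_rt1n in Hxu. destruct Hxu as [|w' u Hxw' Hwu]; [exact (HNu w Hxw)|].
  apply (terminating_mod_acyclic HS Hter (x := w')).
  - exact (rstep_TRS_wf HS Hxw' Hx).
  - apply clos_rt1n_rt, rtc_mod_of_rtc in Hwu.
    apply clos_rt_t with u; [exact Hwu|]. apply t_step.
    exists x, w'. split; [exact Hux|split; [exact Hxw'|apply rst_refl]].
Qed.

Lemma right_B_reduced_rhs_NF (R : rules F) l r :
  right_B_reduced R B -> R l r -> NF (rstep R) r.
Proof. intros HrR Hlr v Hv. exact (HrR l r Hlr v (rstep_mod_of_rstep Hv)). Qed.

Lemma lhs_reducible (R S : rules F) l r :
  is_TRS ar S -> norm_equiv_mod ar R S B -> terminating_mod ar S B ->
  S l r -> wf ar l -> exists w, rstep R l w.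
Proof.
  intros HS Hne Hter Hlr Hwl. apply not_all_not_ex. intros HN.
  exact (norm_equiv_mod_NF HS Hne Hter Hwl HN (rstep_rule S l r Hlr)).
Qed.

Lemma left_reduced_arg_NF (R : rules F) l r f ts1 s ts2 :
  left_reduced R -> R l r -> l = Fun f (ts1 ++ s :: ts2) -> NF (rstep R) s.
Proof.
  intros HL Hlr El u Hsu. apply (HL l r Hlr (Fun f (ts1 ++ u :: ts2))). subst l.
  apply rstep_ctx. apply rstep_small_lhs in Hsu. revert Hsu. apply rstep_mono.
  intros l0 r0 [Hlr0 Hsize]. split; [exact Hlr0|].
  intros E. injection E as -> ->. pose proof (size_arg_lt f ts1 s ts2). lia.
Qed.

Lemma left_reduced_instance (R : rules F) l r l0 r0 (sg : nat -> term) :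
  left_reduced R -> R l r -> R l0 r0 -> l = subst sg l0 -> l0 = l /\ r0 = r.
Proof.
  intros HL Hlr Hlr0 El.
  destruct (classic ((l0, r0) = (l, r))) as [E|Hne]; [injection E; auto|].
  exfalso. apply (HL l r Hlr (subst sg r0)).
  assert (H : rstep (remove_rule R l r) (subst sg l0) (subst sg r0))
    by (apply rstep_root; split; assumption).
  rewrite <- El in H. exact H.
Qed.

Lemma rstep_root_of_NF_args (S : rules F) t w :
  (forall f ts1 s ts2, t = Fun f (ts1 ++ s :: ts2) -> NF (rstep S) s) ->
  rstep S t w -> exists l r sg, S l r /\ t = subst sg l /\ w = subst sg r.
Proof.
  intros Hargs Hst. revert Hargs. destruct Hst as [l r sg Hlr|f ts1 ts2 s s' Hs]; intros Hargs.
  - exists l, r, sg. auto.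
  - destruct (Hargs f ts1 s ts2 eq_refl _ Hs).
Qed.

Lemma lhs_rstep_at_root (R S : rules F) l r w :
  is_TRS ar S -> norm_equiv_mod ar R S B -> terminating_mod ar S B ->
  left_reduced R -> R l r -> wf ar l -> rstep S l w ->
  exists l' r' sg, S l' r' /\ l = subst sg l' /\ w = subst sg r'.
Proof.
  intros HS Hne Hter HL Hlr Hwl. apply rstep_root_of_NF_args.
  intros f ts1 s ts2 El. apply (norm_equiv_mod_NF HS Hne Hter).
  - subst l. inversion Hwl as [|? ? _ Hall]. apply Hall, in_or_app. simpl. auto.
  - eapply left_reduced_arg_NF; eassumption.
Qed.

Lemma rule_has_variant (R S : rules F) :
  is_TRS ar R -> is_TRS ar S ->
  norm_equiv_mod ar R S B -> norm_equiv_mod ar S R B ->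
  terminating_mod ar R B -> terminating_mod ar S B ->
  left_reduced R -> left_reduced S -> right_B_reduced R B -> right_B_reduced S B ->
  forall l r, R l r -> exists l' r', S l' r' /\ right_B_equiv_variant B l r l' r'.
Proof.
  intros HR HS HRS HSR HtR HtS HLR HLS HrR HrS l r Hlr.
  destruct (HR l r Hlr) as [Hwl [Hwr [_ Hvr]]].
  destruct (proj1 (HRS l r Hwl Hwr)) as [u [[Hlu HNu] Hur]].
  { exists r. split; [|apply rst_refl].
    split; [apply rt_step, rstep_rule, Hlr|exact (right_B_reduced_rhs_NF l HrR Hlr)]. }
  apply clos_rt_rt1n in Hlu. destruct Hlu as [|w u Hlw Hwu].
  { (* l ~B r would give the R/B-cycle l -> r ~B l *)
    exfalso. apply (terminating_mod_acyclic HR HtR Hwl). apply t_step.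
    exists l, r. split; [apply rst_refl|split; [apply rstep_rule, Hlr|apply rst_sym, Hur]]. }
  destruct (lhs_rstep_at_root r HS HRS HtS HLR Hlr Hwl Hlw) as [l' [r' [sg [Hlr' [El Ew]]]]].
  destruct (HS l' r' Hlr') as [Hwl' [_ [_ Hvr']]].
  destruct (lhs_reducible r' HS HRS HtS Hlr' Hwl') as [w' Hlw'].
  destruct (lhs_rstep_at_root r' HR HSR HtR HLS Hlr' Hwl' Hlw') as [l0 [r0 [tau [Hlr0 [El' _]]]]].
  assert (El0 : l0 = l /\ r0 = r).
  { apply (left_reduced_instance r l0 r0 (fun x => subst sg (tau x)) HLR Hlr Hlr0).
    rewrite <- subst_comp, <- El', <- El. reflexivity. }
  destruct El0 as [-> ->].
  assert (Hret : subst sg (subst tau l) = l) by (rewrite <- El', <- El; reflexivity).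
  destruct (retraction_renaming sg tau Hret) as [rho [Hrho Hrho_tau]].
  assert (Hr'back : subst tau (subst sg r') = r').
  { rewrite subst_comp. rewrite <- (subst_Var r') at 2. apply subst_ext_occ.
    intros y Hy. apply (retraction_inverse sg tau Hret). rewrite <- El'. apply Hvr', Hy. }
  assert (HNw : NF (rstep S) w).
  { subst w. exact (NF_subst_of_retraction sg tau Hr'back (right_B_reduced_rhs_NF l' HrS Hlr')). }
  apply clos_rt1n_rt, rtc_NF in Hwu; [subst u|exact HNw].
  exists l', r'. split; [exact Hlr'|]. exists rho. split; [exact Hrho|split].
  - rewrite El'. apply subst_ext_occ. exact Hrho_tau.
  - rewrite <- Hr'back, <- Ew.
    replace (subst rho r) with (subst tau r)
      by (apply subst_ext_occ; intros x Hx; symmetry; apply Hrho_tau, Hvr, Hx).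
    apply convB_subst, rst_sym, Hur.
Qed.

End RewritingModulo.

Theorem lemma6p17 (F : Type) (ar : F -> nat) (B R S : rules F) :
  is_ES_varsym ar B ->
  is_TRS ar R -> is_TRS ar S ->
  norm_equiv_mod ar R S B ->
  terminating_mod ar R B -> terminating_mod ar S B ->
  left_reduced R -> left_reduced S ->
  right_B_reduced R B -> right_B_reduced S B ->
  (forall l r, R l r -> exists l' r', S l' r' /\ right_B_equiv_variant B l r l' r') /\
  (forall l r, S l r -> exists l' r', R l' r' /\ right_B_equiv_variant B l r l' r').
Proof.
  intros HB HR HS HRS HtR HtS HLR HLS HrR HrS.
  assert (HSR : norm_equiv_mod ar S R B).
  { intros s t Hs Ht. symmetry. exact (HRS s t Hs Ht). }
  split; apply (rule_has_variant HB); assumption.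
Qed.
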